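(* Let $\langle\mathcal U,\mathcal S,k\rangle$ be an instance of Set Cover as in the context and $D_{SC}$ the associated digraph with functions $F,B$. If there exists a set cover of size $k$ (a $k$-element subfamily of $\mathcal S$ whose union is $\mathcal U$), then the ST problem for $(D_{SC},F,B)$ has a positive answer.
   Context: Snow Team problem (ST): given a digraph $D=(\mathcal V,\mathcal A)$ whose underlying graph is connected, and $F:\mathcal V\to\{0,1\}$, $B:\mathcal V\to\mathbb N$, with $\mathbf k_B=\sum_vB(v)$: do there exist $\mathbf k_B$ directed walks, exactly $B(v)$ of which start at each $v$, such that, letting $H$ be the subgraph consisting of the vertices and arcs of these walks, all vertices of $F^{-1}(1)$ lie in one connected component of the underlying undirected graph of $H$? Such walks form a solution. Construction: $\mathcal U=\{1,\dots,n\}$, $\mathcal S=\{S_1,\dots,S_m\}$ with $S_t\subseteq\mathcal U$, $\bigcup_tS_t=\mathcal U$, and $1\le k\le m$. Write $S_t=\{x_1<\dots<x_{\ell(t)}\}$ and $I_i=\{j: i\in S_j\}$. The digraph $D_{SC}$ has vertices $u_i$ ($i\in\mathcal U$); $u_{i,j},u'_{i,j},v_{i,j},v'_{i,j}$ ($i\in\mathcal U$, $j\in I_i$); and $z,z_1,\dots,z_k$. Its arcs are those of the vertical paths $P_{i,j}=(u_{i,j},u_i,u'_{i,j},v_{i,j},v'_{i,j})$ ($i\in\mathcal U,j\in I_i$), of the horizontal paths $P^h_t=(z,v_{x_1,t},v_{x_2,t},\dots,v_{x_{\ell(t)},t})$ ($t\in\{1,\dots,m\}$, with $x_1<\dots<x_{\ell(t)}$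 the elements of $S_t$), and the arcs $(z_l,z)$ for $l=1,\dots,k$. The $i$-th element component $C_i$ is the subgraph induced by $\bigcup_{j\in I_i}V(P_{i,j})$. Set $F(v)=1$ for all vertices $v$, and $B(v)=1$ if $v$ is a source of $D_{SC}$ (i.e. $v\in\{u_{i,j}\}\cup\{z_1,\dots,z_k\}$) and $B(v)=0$ otherwise. *)

From Stdlib Require Import Arith List Relations Bool.
Import ListNotations.
Open Scope bool_scope.

Section ST.
Variable V : Type.
Variable vert : V -> Prop.
Variable arc : V -> V -> Prop.

Inductive is_walk : list V -> Prop :=
| walk_one x : vert x -> is_walk [x]
| walk_cons x y l : arc x y -> is_walk (y :: l) -> is_walk (x :: y :: l).

Variable F : V -> bool.
Variable B : V -> nat.

(* A family of walks: W v r is the r-th walk starting at v, for r < B v.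
   H = subgraph of vertices and arcs of these walks. *)
Definition inH (W : V -> nat -> list V) (x : V) : Prop :=
  exists v r, vert v /\ r < B v /\ In x (W v r).

Definition arcH (W : V -> nat -> list V) (x y : V) : Prop :=
  exists v r, vert v /\ r < B v /\ exists l1 l2, W v r = l1 ++ x :: y :: l2.

Definition ST_solution (W : V -> nat -> list V) : Prop :=
  (forall v r, vert v -> r < B v -> is_walk (W v r) /\ hd_error (W v r) = Some v) /\
  (forall x, vert x -> F x = true -> inH W x) /\
  (forall x y, vert x -> vert y -> F x = true -> F y = true ->
     clos_refl_trans V (fun a b => arcH W a b \/ arcH W b a) x y).

Definition ST_positive : Prop := exists W, ST_solution W.
End ST.

(* S t i = true  iff  i is an element of S_t. *)
Inductive VSC : Type :=
| vU   (i : nat)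
| vUij (i j : nat)
| vUp  (i j : nat)
| vV   (i j : nat)
| vVp  (i j : nat)
| vZ
| vZl  (l : nat).

Section DSC.
Variables (n m k : nat) (S : nat -> nat -> bool).

Definition inI (i j : nat) : Prop := 1 <= i <= n /\ 1 <= j <= m /\ S j i = true.

Definition vertSC (v : VSC) : Prop :=
  match v with
  | vU i => 1 <= i <= n
  | vUij i j | vUp i j | vV i j | vVp i j => inI i j
  | vZ => True
  | vZl l => 1 <= l <= k
  end.

Definition firstS (t x : nat) : Prop :=
  S t x = true /\ forall y, y < x -> S t y = false.
Definition nextS (t x y : nat) : Prop :=
  x < y /\ S t x = true /\ S t y = true /\ forall w, x < w < y -> S t w = false.

Definition arcSC (a b : VSC) : Prop :=
  match a, b with
  | vUij i j, vU i' => inI i j /\ i' = i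
  | vU i, vUp i' j => inI i' j /\ i' = i
  | vUp i j, vV i' j' => inI i j /\ i' = i /\ j' = j
  | vV i j, vVp i' j' => inI i j /\ i' = i /\ j' = j
  | vZ, vV x t => 1 <= t <= m /\ firstS t x
  | vV x t, vV y t' => t' = t /\ 1 <= t <= m /\ nextS t x y
  | vZl l, vZ => 1 <= l <= k
  | _, _ => False
  end.

Definition FSC (v : VSC) : bool := true.

Definition BSC (v : VSC) : nat :=
  match v with
  | vUij i j => if (1 <=? i) && (i <=? n) && (1 <=? j) && (j <=? m) && S j i then 1 else 0
  | vZl l => if (1 <=? l) && (l <=? k) then 1 else 0
  | _ => 0
  end.
End DSC.

Definition SC_instance (n m k : nat) (S : nat -> nat -> bool) : Prop :=
  (forall t i, 1 <= t <= m -> S t i = true -> 1 <= i <= n) /\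
  (forall i, 1 <= i <= n -> exists t, 1 <= t <= m /\ S t i = true) /\
  1 <= k <= m.

Definition set_cover_of_size (n m k : nat) (S : nat -> nat -> bool) : Prop :=
  exists C : list nat, NoDup C /\ length C = k /\
    (forall t, In t C -> 1 <= t <= m) /\
    (forall i, 1 <= i <= n -> exists t, In t C /\ S t i = true).

(* Choose a cover C = [t_1; ...; t_k].  Each source u_{i,j} walks down its whole vertical path
   P_{i,j}, and each z_l walks to z and then along the horizontal path P^h_{t_l}.  Every walk
   meets the component of z: the horizontal walks pass through z, and the vertical walk from
   u_{i,j} passes through u_i, which is joined to v_{i,t} on P_{i,t}, where t is a set of the
   cover containing i, hence to z along P^h_t.  So H is connected. *)

From Stdlib Require Import Arith List Relations Lia.
Import ListNotations.

Lemma clos_rt_symmetric (A : Type) (R : relation A) :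
  (forall a b, R a b -> R b a) -> forall x y, clos_refl_trans A R x y -> clos_refl_trans A R y x.
Proof.
  intros R_sym x y Hxy; induction Hxy as [x y Hxy | x | x y z _ IHxy _ IHyz].
  - apply rt_step; auto.
  - apply rt_refl.
  - eapply rt_trans; eauto.
Qed.

Section HubConnectivity.
Variables (V : Type) (vert : V -> Prop) (B : V -> nat) (W : V -> nat -> list V).

Let linked (a b : V) : Prop := arcH V vert B W a b \/ arcH V vert B W b a.
Let connected : relation V := clos_refl_trans V linked.

Lemma connected_sym x y : connected x y -> connected y x.
Proof. apply clos_rt_symmetric; unfold linked; tauto. Qed.

Lemma connected_on_suffix v r : vert v -> r < B v ->
  forall L pre, W v r = pre ++ L -> forall x y, In x L -> In y L -> connected x y.
Proof.
  intros Hv Hr L; induction L as [|a L IH]; intros pre HL x y Hx Hy; [destruct Hx|].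
  destruct L as [|b L'].
  { destruct Hx as [<-|[]], Hy as [<-|[]]; apply rt_refl. }
  assert (Hab : connected a b).
  { apply rt_step; left; exists v, r; repeat split; auto; exists pre, L'; exact HL. }
  assert (IHb : forall x y, In x (b :: L') -> In y (b :: L') -> connected x y).
  { apply (IH (pre ++ [a])); rewrite HL, <- app_assoc; reflexivity. }
  destruct Hx as [<-|Hx], Hy as [<-|Hy].
  - apply rt_refl.
  - apply rt_trans with b; [exact Hab | apply IHb; simpl; auto].
  - apply rt_trans with b; [apply IHb; simpl; auto | apply connected_sym, Hab].
  - apply IHb; auto.
Qed.

Lemma connected_on_walk v r x y : vert v -> r < B v ->
  In x (W v r) -> In y (W v r) -> connected x y.
Proof. intros Hv Hr; apply (connected_on_suffix v r Hv Hr _ []); reflexivity. Qed.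

Lemma ST_solution_of_hub (arc : V -> V -> Prop) (F : V -> bool) (hub : V) :
  (forall v r, vert v -> r < B v -> is_walk V vert arc (W v r) /\ hd_error (W v r) = Some v) ->
  (forall x, vert x -> F x = true -> inH V vert B W x) ->
  (forall v r, vert v -> r < B v -> exists x, In x (W v r) /\ connected x hub) ->
  ST_solution V vert arc F B W.
Proof.
  intros Hwalks Hcovered Hmeets.
  assert (to_hub : forall x, vert x -> F x = true -> connected x hub).
  { intros x Hx HFx; destruct (Hcovered x Hx HFx) as (v & r & Hv & Hr & Hxin).
    destruct (Hmeets v r Hv Hr) as (y & Hyin & Hy).
    apply rt_trans with y; [apply (connected_on_walk v r) | ]; auto. }
  split; [exact Hwalks | split; [exact Hcovered |]].
  intros x y Hx Hy HFx HFy.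
  apply rt_trans with hub; [| apply connected_sym]; apply to_hub; auto.
Qed.

End HubConnectivity.

Section SourceCounts.
Variables (n m k : nat) (S : nat -> nat -> bool).

Lemma BSC_vUij_pos i j : 0 < BSC n m k S (vUij i j) <-> inI n m S i j.
Proof.
  unfold BSC, inI.
  destruct (Nat.leb_spec0 1 i), (Nat.leb_spec0 i n), (Nat.leb_spec0 1 j),
    (Nat.leb_spec0 j m), (S j i); simpl; split; intuition (try lia; discriminate).
Qed.

Lemma BSC_vZl_pos l : 0 < BSC n m k S (vZl l) <-> 1 <= l <= k.
Proof.
  unfold BSC; destruct (Nat.leb_spec0 1 l), (Nat.leb_spec0 l k); simpl; lia.
Qed.

Lemma BSC_pos_inv v r : r < BSC n m k S v ->
  (exists i j, v = vUij i j /\ inI n m S i j) \/ (exists l, v = vZl l /\ 1 <= l <= k).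
Proof.
  destruct v; intros Hr; try (simpl in Hr; lia).
  - left; exists i, j; split; [reflexivity | apply BSC_vUij_pos; lia].
  - right; exists l; split; [reflexivity | apply BSC_vZl_pos; lia].
Qed.

End SourceCounts.

Section CoverWalks.
Variables (n m k : nat) (S : nat -> nat -> bool).
Hypothesis S_range : forall t i, 1 <= t <= m -> S t i = true -> 1 <= i <= n.

Notation vert := (vertSC n m k S).
Notation arc := (arcSC n m k S).
Notation B := (BSC n m k S).

Definition vertical_path (i j : nat) : list VSC := [vUij i j; vU i; vUp i j; vV i j; vVp i j].

Definition row_vertices (t a b : nat) : list VSC :=
  map (fun x => vV x t) (filter (S t) (seq a b)).

Lemma is_walk_vertical_path i j : inI n m S i j -> is_walk VSC vert arc (vertical_path i j).
Proof. intros ([Hi1 Hi2] & [Hj1 Hj2] & Hs); repeat constructor; auto. Qed.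

Lemma is_walk_row_from t x a b : 1 <= t <= m -> S t x = true -> x < a ->
  (forall w, x < w < a -> S t w = false) ->
  is_walk VSC vert arc (vV x t :: row_vertices t a b).
Proof.
  intros Ht; revert x a; induction b as [|b IH]; intros x a Hx Hxa Hgap;
    unfold row_vertices; simpl.
  - constructor; simpl; unfold inI; specialize (S_range t x Ht Hx); auto.
  - destruct (S t a) eqn:Ha; simpl.
    + constructor; [simpl; repeat split; auto; lia | apply IH; auto; lia].
    + apply IH; auto; intros w Hw.
      destruct (Nat.eq_dec w a) as [->|]; [exact Ha | apply Hgap; lia].
Qed.

Lemma is_walk_z_row t a b : 1 <= t <= m -> (forall w, w < a -> S t w = false) ->
  is_walk VSC vert arc (vZ :: row_vertices t a b).
Proof.
  intros Ht; revert a; induction b as [|b IH]; intros a Hbelow; unfold row_vertices; simpl.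
  - constructor; exact I.
  - destruct (S t a) eqn:Ha; simpl.
    + constructor; [split; [exact Ht | split; auto] | apply is_walk_row_from; auto; lia].
    + apply IH; intros w Hw.
      destruct (Nat.eq_dec w a) as [->|]; [exact Ha | apply Hbelow; lia].
Qed.

Variable C : list nat.
Hypothesis C_length : length C = k.
Hypothesis C_range : forall t, In t C -> 1 <= t <= m.
Hypothesis C_cover : forall i, 1 <= i <= n -> exists t, In t C /\ S t i = true.

(* z_l follows the horizontal path of the l-th set of the cover.  Every source has a single
   walk, and the value at non-sources is never used. *)
Definition cover_walks (v : VSC) (r : nat) : list VSC :=
  match v with
  | vUij i j => vertical_path i j
  | vZl l => vZl l :: vZ :: row_vertices (nth (l - 1) C 0) 1 n
  | _ => [v]
  end.

Let connected := clos_refl_trans VSC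
  (fun a b => arcH VSC vert B cover_walks a b \/ arcH VSC vert B cover_walks b a).

Lemma cover_walks_are_walks v r : r < B v ->
  is_walk VSC vert arc (cover_walks v r) /\ hd_error (cover_walks v r) = Some v.
Proof.
  intros Hr; destruct (BSC_pos_inv n m k S v r Hr) as [(i & j & -> & Hij)|(l & -> & Hl)];
    split; try reflexivity.
  - apply is_walk_vertical_path, Hij.
  - assert (Ht : 1 <= nth (l - 1) C 0 <= m) by (apply C_range, nth_In; lia).
    constructor; [exact Hl |].
    apply is_walk_z_row; [exact Ht |].
    intros w Hw; destruct (S _ w) eqn:Hs; [specialize (S_range _ _ Ht Hs); lia | reflexivity].
Qed.

Lemma vertex_on_cover_walk x : 1 <= k -> vert x -> inH VSC vert B cover_walks x.
Proof.
  assert (on_vertical : forall i j, inI n m S i j -> In x (vertical_path i j) ->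
            inH VSC vert B cover_walks x).
  { intros i j Hij Hx; exists (vUij i j), 0.
    split; [exact Hij | split; [apply BSC_vUij_pos, Hij | exact Hx]]. }
  assert (on_horizontal : forall l, 1 <= l <= k -> In x (cover_walks (vZl l) 0) ->
            inH VSC vert B cover_walks x).
  { intros l Hl Hx; exists (vZl l), 0.
    split; [exact Hl | split; [apply BSC_vZl_pos, Hl | exact Hx]]. }
  intros k_pos; destruct x; simpl; intros Hx; try (apply (on_vertical i j); simpl; tauto).
  - destruct (C_cover i Hx) as (t & Ht & Hs).
    apply (on_vertical i t); [| simpl; auto].
    split; [exact Hx | split; [apply C_range, Ht | exact Hs]].
  - apply (on_horizontal 1); simpl; auto.
  - apply (on_horizontal l); simpl; auto.
Qed.

Lemma vU_connected_to_vZ i : 1 <= i <= n -> connected (vU i) vZ.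
Proof.
  intros Hi; destruct (C_cover i Hi) as (t & Ht & Hs).
  destruct (In_nth C t 0 Ht) as (p & Hp & Hnth).
  assert (Hit : inI n m S i t) by (split; [exact Hi | split; [apply C_range, Ht | exact Hs]]).
  apply rt_trans with (vV i t).
  - apply connected_on_walk with (v := vUij i t) (r := 0);
      [exact Hit | apply BSC_vUij_pos, Hit | simpl; auto | simpl; tauto].
  - assert (Hl : 1 <= Datatypes.S p <= k) by lia.
    apply connected_on_walk with (v := vZl (Datatypes.S p)) (r := 0);
      [exact Hl | apply BSC_vZl_pos, Hl | | simpl; auto].
    right; right; replace (Datatypes.S p - 1) with p by lia; rewrite Hnth.
    apply in_map_iff; exists i; split; [reflexivity |].
    apply filter_In; split; [apply in_seq; lia | exact Hs].
Qed.

Lemma cover_walk_meets_vZ v r : r < B v ->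
  exists x, In x (cover_walks v r) /\ connected x vZ.
Proof.
  intros Hr; destruct (BSC_pos_inv n m k S v r Hr) as [(i & j & -> & Hij)|(l & -> & _)].
  - exists (vU i); split; [simpl; auto | apply vU_connected_to_vZ, Hij].
  - exists vZ; split; [simpl; auto | apply rt_refl].
Qed.

End CoverWalks.

Theorem lemma5 (n m k : nat) (S : nat -> nat -> bool) :
  SC_instance n m k S ->
  set_cover_of_size n m k S ->
  ST_positive VSC (vertSC n m k S) (arcSC n m k S) FSC (BSC n m k S).
Proof.
  intros (S_range & _ & k_bounds) (C & _ & C_length & C_range & C_cover).
  exists (cover_walks n S C).
  apply ST_solution_of_hub with (hub := vZ).
  - intros v r _; apply cover_walks_are_walks; auto.
  - intros x Hx _; apply vertex_on_cover_walk; auto; lia.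
  - intros v r _; apply cover_walk_meets_vZ; auto.
Qed.
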